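(* Fix $c\in\mathcal{C}'$ with $\mathcal{S}(c)\setminus\{c\}\neq\emptyset$ and arbitrary values of all messages, and let $b_t$, $t\in\mathcal{T}$, be the corresponding beliefs. Let $\boldsymbol\lambda_{c,\mathcal{S}(c)}$ be the current block of messages out of $c$ and $\boldsymbol\lambda^*_{c,\mathcal{S}(c)}$ the updated block. Then the dual decrease $d(c)=g_c(\boldsymbol\lambda_{c,\mathcal{S}(c)})-g_c(\boldsymbol\lambda^*_{c,\mathcal{S}(c)})$ satisfies $$d(c)=\max_{\mathbf{x}_c}b_c(\mathbf{x}_c)+\sum_{s\in\mathcal{S}(c)\setminus\{c\}}\max_{\mathbf{x}_s}b_s(\mathbf{x}_s)-\max_{\mathbf{x}_c}\Big[b_c(\mathbf{x}_c)+\sum_{s\in\mathcal{S}(c)\setminus\{c\}}b_s(\mathbf{x}_s)\Big]\geqslant 0.$$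
   Context: Let $\mathcal{V}=\{1,\dots,n\}$; each variable $x_i$ takes values in a finite set, and for $s\subseteq\mathcal{V}$ write $\mathbf{x}_s=(x_i)_{i\in s}$. Let $\mathcal{C}$ be a collection of subsets of $\mathcal{V}$ with real potentials $\theta_c(\mathbf{x}_c)$, $c\in\mathcal{C}$. Let $\mathcal{C}'$ be a collection of subsets of $\mathcal{V}$ and for each $c\in\mathcal{C}'$ let $\mathcal{S}(c)$ be a collection of subsets of $c$ (possibly containing $c$), with $\mathcal{C}'\cup\bigcup_{c\in\mathcal{C}'}\mathcal{S}(c)\supseteq\mathcal{C}$; put $\mathcal{T}=\mathcal{C}'\cup\bigcup_{c\in\mathcal{C}'}\mathcal{S}(c)$. Messages are reals $\lambda_{c\to s}(\mathbf{x}_s)$, $c\in\mathcal{C}'$, $s\in\mathcal{S}(c)\setminus\{c\}$. For $t\in\mathcal{T}$: $\hat\theta_t=\mathbb{1}(t\in\mathcal{C})\theta_t$; $\gamma_t(\mathbf{x}_t)=\mathbb{1}(t\in\mathcal{C}')\sum_{\hat s\in\mathcal{S}(t)\setminus\{t\}}\lambda_{t\to\hat s}(\mathbf{x}_{\hat s})$; $\lambda_t(\mathbf{x}_t)=\sum_{c'\in\mathcal{C}':\,t\in\mathcal{S}(c')\setminus\{c'\}}\lambda_{c'\to t}(\mathbf{x}_t)$; beliefs $b_t=\hat\theta_t+\lambda_t-\gamma_t$. For $s\in\mathcal{S}(c)\setminus\{c\}$, $\lambda_s^{-c}(\mathbf{x}_s)=\sum_{\hat c\in\mathcal{C}':\,\hat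 c\ne c,\ s\in\mathcal{S}(\hat c)\setminus\{\hat c\}}\lambda_{\hat c\to s}(\mathbf{x}_s)$. With all messages not of the form $\lambda_{c\to s}$ held fixed, $g_c$ is the function of the block $\boldsymbol\lambda_{c,\mathcal{S}(c)}=(\lambda_{c\to s}(\mathbf{x}_s))_{s\in\mathcal{S}(c)\setminus\{c\}}$ given by $g_c=\max_{\mathbf{x}_c}[\hat\theta_c(\mathbf{x}_c)-\sum_{s\in\mathcal{S}(c)\setminus\{c\}}\lambda_{c\to s}(\mathbf{x}_s)+\lambda_c(\mathbf{x}_c)]+\sum_{s\in\mathcal{S}(c)\setminus\{c\}}\max_{\mathbf{x}_s}[\hat\theta_s(\mathbf{x}_s)-\gamma_s(\mathbf{x}_s)+\lambda^{-c}_s(\mathbf{x}_s)+\lambda_{c\to s}(\mathbf{x}_s)]$. The updated block is $\lambda^*_{c\to s}(\mathbf{x}_s)=-\hat\theta_s(\mathbf{x}_s)+\gamma_s(\mathbf{x}_s)-\lambda_s^{-c}(\mathbf{x}_s)+\frac{1}{|\mathcal{S}(c)\setminus\{c\}|}\max_{\mathbf{x}_{c\setminus s}}[\hat\theta_c(\mathbf{x}_c)+\lambda_c(\mathbf{x}_c)+\sum_{\hat s\in\mathcal{S}(c)\setminus\{c\}}(\hat\theta_{\hat s}-\gamma_{\hat s}+\lambda^{-c}_{\hat s})(\mathbf{x}_{\hat s})]$. *)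

From HB Require Import structures.
From mathcomp Require Import all_boot all_order all_algebra.
Set Implicit Arguments. Unset Strict Implicit. Unset Printing Implicit Defensive.
Import Order.TTheory GRing.Theory Num.Theory.
Local Open Scope ring_scope.

(* A function of x_s is represented as a
   function of full assignments that only depends on the coordinates in s
   ([local s f]). *)

Section MPLP.
Variables (R : realFieldType) (n : nat) (X : 'I_n -> finType).

Definition assign := @fprod 'I_n X.

Definition agree (s : {set 'I_n}) (x y : assign) : bool :=
  [forall i, (i \in s) ==> (x i == y i)].

Definition local (s : {set 'I_n}) (f : assign -> R) : Prop :=
  forall x y, agree s x y -> f x = f y.

(* max over all assignments (max_{x} f(x)); 0 if there is no assignment *)
Definition maxf (f : assign -> R) : R :=
  match [pick x : assign] with
  | Some x0 => \big[Num.max/f x0]_(x : assign) f x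
  | None => 0
  end.

(* max over the assignments agreeing with x on s, i.e. max_{x_{c \ s}} when f
   depends only on x_c; the result is a function of x_s *)
Definition maxagree (s : {set 'I_n}) (f : assign -> R) (x : assign) : R :=
  \big[Num.max/f x]_(y : assign | agree s x y) f y.

Variables (C Cp : {set {set 'I_n}}) (S : {set 'I_n} -> {set {set 'I_n}})
  (theta : {set 'I_n} -> assign -> R)
  (lam : {set 'I_n} -> {set 'I_n} -> assign -> R).
(* lam c s x  is the message  lambda_{c -> s}(x_s)  (meaningful for
   c \in Cp, s \in S c :\ c) *)

Definition Sc (c : {set 'I_n}) : {set {set 'I_n}} := S c :\ c.

Definition Tcoll : {set {set 'I_n}} := Cp :|: \bigcup_(c in Cp) S c.

Definition thetah (t : {set 'I_n}) (x : assign) : R :=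
  if t \in C then theta t x else 0.

Definition gamma (t : {set 'I_n}) (x : assign) : R :=
  if t \in Cp then \sum_(s in Sc t) lam t s x else 0.

Definition lamin (t : {set 'I_n}) (x : assign) : R :=
  \sum_(c' in Cp | t \in Sc c') lam c' t x.

Definition belief (t : {set 'I_n}) (x : assign) : R :=
  thetah t x + lamin t x - gamma t x.

Definition lamminus (c s : {set 'I_n}) (x : assign) : R :=
  \sum_(c' in Cp | (c' != c) && (s \in Sc c')) lam c' s x.

(* g_c as a function of the block mu (mu s = lambda_{c -> s}, s \in S(c)\{c}),
   all other messages held at their values in lam *)
Definition g (c : {set 'I_n}) (mu : {set 'I_n} -> assign -> R) : R :=
  maxf (fun x => thetah c x - \sum_(s in Sc c) mu s x + lamin c x)
  + \sum_(s in Sc c)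
      maxf (fun x => thetah s x - gamma s x + lamminus c s x + mu s x).

Definition lamstar (c : {set 'I_n}) (s : {set 'I_n}) (x : assign) : R :=
  - thetah s x + gamma s x - lamminus c s x
  + (#|Sc c|%:R)^-1 *
    maxagree s (fun y => thetah c y + lamin c y
                  + \sum_(sh in Sc c) (thetah sh y - gamma sh y + lamminus c sh y)) x.

Definition dualdec (c : {set 'I_n}) : R := g c (lam c) - g c (lamstar c).

End MPLP.

From HB Require Import structures.
From mathcomp Require Import all_boot all_order all_algebra.
From mathcomp Require Import ring.
Set Implicit Arguments. Unset Strict Implicit. Unset Printing Implicit Defensive.
Import Order.TTheory GRing.Theory Num.Theory.
Local Open Scope ring_scope.

(* Write [B] for the joint belief b_c + sum_s b_s.  On the current block the
   arguments of the maxima in g_c are exactly b_c and the b_s, so g_c equals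
   max b_c + sum_s max b_s.  The update sets each message so that the s-term
   becomes (1/k) max_{x_{c\s}} B, whose maximum is (1/k) max B, while the
   c-term becomes B minus the average of the max_{x_{c\s}} B; this is <= 0
   everywhere and vanishes at a maximiser of B.  Hence g_c at lambda^* is max B,
   and the decrease is nonnegative because a maximum of a sum is at most the
   sum of the maxima. *)

Section MaxAssign.
Variables (R : realFieldType) (n : nat) (X : 'I_n -> finType).
Implicit Types (f g : assign X -> R) (s : {set 'I_n}) (x : assign X).

Lemma card_assign_gt0 : (forall i, 0 < #|X i|)%N -> (0 < #|assign X|)%N.
Proof. by move=> X_gt0; rewrite card_fprod prodn_gt0. Qed.

Lemma eq_maxf f g : f =1 g -> maxf f = maxf g.
Proof. by move=> fg; rewrite /maxf; case: pickP => // y _; rewrite fg; apply: eq_bigr. Qed.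

Lemma eq_maxagree s f g : f =1 g -> maxagree s f =1 maxagree s g.
Proof. by move=> fg x; rewrite /maxagree fg; apply: eq_bigr. Qed.

Lemma maxagree_ge s f x : f x <= maxagree s f x.
Proof.
by apply: (big_rec (fun v => f x <= v)) => // y v _ le_v; rewrite le_max le_v orbT.
Qed.

Variable x0 : assign X.

Lemma maxf_ge f x : f x <= maxf f.
Proof.
rewrite /maxf; case: pickP => [y _|/(_ x0)//].
by rewrite (bigD1 x) //= le_max lexx.
Qed.

Lemma maxf_le f M : (forall x, f x <= M) -> maxf f <= M.
Proof.
move=> le_fM; rewrite /maxf; case: pickP => [y _|/(_ x0)//].
by apply: (big_ind (fun v => v <= M)) => // u v le_u le_v; rewrite ge_max le_u.
Qed.

Lemma maxf_attained f : exists x, maxf f = f x.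
Proof.
rewrite /maxf; case: pickP => [y _|/(_ x0)//].
apply: (big_ind (fun v => exists x, v = f x)); first by exists y.
- by move=> u v [a ->] [b ->]; case: (leP (f a) (f b)) => _; [exists b|exists a].
- by move=> z _; exists z.
Qed.

Lemma maxagree_le_maxf s f x : maxagree s f x <= maxf f.
Proof.
apply: (big_ind (fun v => v <= maxf f)) => [|u v le_u le_v|y _]; last exact: maxf_ge.
- exact: maxf_ge.
- by rewrite ge_max le_u.
Qed.

Lemma maxagree_argmax s f x : maxf f = f x -> maxagree s f x = f x.
Proof. by move=> fx_max; apply/le_anti; rewrite maxagree_ge -fx_max maxagree_le_maxf. Qed.

Lemma maxf_maxagree s f : maxf (maxagree s f) = maxf f.
Proof.
have [xm fxm] := maxf_attained f.
apply/le_anti; rewrite maxf_le => [|x]; last exact: maxagree_le_maxf.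
by rewrite fxm -(maxagree_argmax s fxm) maxf_ge.
Qed.

Lemma maxfZ a f : 0 <= a -> maxf (fun x => a * f x) = a * maxf f.
Proof.
move=> a_ge0; have [xm fxm] := maxf_attained f.
apply/le_anti; rewrite maxf_le => [|x]; last by rewrite ler_wpM2l ?maxf_ge.
by rewrite fxm (maxf_ge (fun x => a * f x)).
Qed.

Lemma maxf_sub_mean_maxagree (K : {set {set 'I_n}}) f : K != set0 ->
  maxf (fun x => f x - #|K|%:R^-1 * \sum_(s in K) maxagree s f x) = 0.
Proof.
move=> K_neq0; set k : R := #|K|%:R.
have k_neq0 : k != 0 by rewrite pnatr_eq0 -lt0n card_gt0.
have mean_const v : k^-1 * \sum_(s in K) v = v.
  by rewrite sumr_const -mulr_natl mulrA mulVf ?mul1r.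
have [xm fxm] := maxf_attained f.
apply/le_anti; rewrite maxf_le => [|x] /=.
  apply: le_trans (maxf_ge _ xm) => /=.
  by rewrite (eq_bigr _ (fun s _ => maxagree_argmax s fxm)) mean_const subrr.
rewrite subr_le0 -[X in X <= _](mean_const (f x)).
by rewrite ler_wpM2l ?invr_ge0 ?ler0n // ler_sum // => s _; apply: maxagree_ge.
Qed.

End MaxAssign.

Section DualDecrease.
Variables (R : realFieldType) (n : nat) (X : 'I_n -> finType).
Variables (C Cp : {set {set 'I_n}}) (S : {set 'I_n} -> {set {set 'I_n}})
  (theta : {set 'I_n} -> assign X -> R)
  (lam : {set 'I_n} -> {set 'I_n} -> assign X -> R) (c : {set 'I_n}).
Hypothesis Cp_c : c \in Cp.

Let b := belief C Cp S theta lam.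
Let K := Sc S c.

Definition joint_belief (x : assign X) : R := b c x + \sum_(s in K) b s x.

Lemma belief_center x :
  b c x = thetah C theta c x + lamin Cp S lam c x - \sum_(s in K) lam c s x.
Proof. by rewrite /b /belief /gamma Cp_c. Qed.

Lemma lamin_split s x : s \in K ->
  lamin Cp S lam s x = lam c s x + lamminus Cp S lam c s x.
Proof.
move=> K_s; rewrite /lamin /lamminus (bigD1 c) /=; last by rewrite Cp_c K_s.
by congr (_ + _); apply: eq_bigl => c'; rewrite -andbA [(_ != c) && _]andbC.
Qed.

Lemma belief_sub s x : s \in K -> b s x =
  thetah C theta s x - gamma Cp S lam s x + lamminus Cp S lam c s x + lam c s x.
Proof. by move=> K_s; rewrite /b /belief lamin_split //; ring. Qed.

Lemma g_current : g C Cp S theta lam c (lam c) = maxf (b c) + \sum_(s in K) maxf (b s).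
Proof.
rewrite /g; congr (_ + _).
  by apply: eq_maxf => x; rewrite belief_center; ring.
by apply: eq_bigr => s K_s; apply: eq_maxf => x; rewrite belief_sub.
Qed.

Lemma lamstar_target_joint y :
  thetah C theta c y + lamin Cp S lam c y
  + \sum_(sh in K) (thetah C theta sh y - gamma Cp S lam sh y + lamminus Cp S lam c sh y)
  = joint_belief y.
Proof.
rewrite /joint_belief belief_center (eq_bigr _ (fun s K_s => belief_sub y K_s)).
by rewrite [in RHS]big_split /=; ring.
Qed.

Let k : R := #|K|%:R.

Lemma sub_term_lamstar s x :
  thetah C theta s x - gamma Cp S lam s x + lamminus Cp S lam c s x
  + lamstar C Cp S theta lam c s x = k^-1 * maxagree s joint_belief x.
Proof. by rewrite /lamstar (eq_maxagree _ lamstar_target_joint); ring. Qed.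

Lemma center_term_lamstar x :
  thetah C theta c x - \sum_(s in K) lamstar C Cp S theta lam c s x + lamin Cp S lam c x
  = joint_belief x - k^-1 * \sum_(s in K) maxagree s joint_belief x.
Proof.
rewrite -lamstar_target_joint mulr_sumr.
under [X in _ = _ - X]eq_bigr => s _ do rewrite -sub_term_lamstar.
by rewrite !big_split /=; ring.
Qed.

Lemma g_updated (x0 : assign X) : K != set0 ->
  g C Cp S theta lam c (lamstar C Cp S theta lam c) = maxf joint_belief.
Proof.
move=> K_neq0; rewrite /g (eq_maxf center_term_lamstar) maxf_sub_mean_maxagree //.
rewrite add0r (eq_bigr (fun _ => k^-1 * maxf joint_belief)); last first.
  move=> s _; rewrite (eq_maxf (sub_term_lamstar s)) maxfZ ?invr_ge0 ?ler0n //.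
  by rewrite maxf_maxagree.
by rewrite -mulr_sumr sumr_const -mulr_natl mulrA mulVf ?mul1r // pnatr_eq0 -lt0n card_gt0.
Qed.

Lemma dualdec_joint (x0 : assign X) : K != set0 ->
  dualdec C Cp S theta lam c
  = maxf (b c) + \sum_(s in K) maxf (b s) - maxf joint_belief.
Proof. by move=> K_neq0; rewrite /dualdec g_current (g_updated x0 K_neq0). Qed.

Lemma maxf_joint_belief_le (x0 : assign X) :
  maxf joint_belief <= maxf (b c) + \sum_(s in K) maxf (b s).
Proof.
apply: (maxf_le x0) => x.
by rewrite lerD ?ler_sum // => [|s _]; apply: maxf_ge.
Qed.

End DualDecrease.

Theorem proposition2 (R : realFieldType) (n : nat) (X : 'I_n -> finType)
  (C Cp : {set {set 'I_n}}) (S : {set 'I_n} -> {set {set 'I_n}})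
  (theta : {set 'I_n} -> assign X -> R)
  (lam : {set 'I_n} -> {set 'I_n} -> assign X -> R)
  (c : {set 'I_n}) :
  (forall i, 0 < #|X i|)%N ->
  (forall c', c' \in Cp -> forall s, s \in S c' -> s \subset c') ->
  C \subset Tcoll Cp S ->
  (forall t, t \in C -> local t (theta t)) ->
  (forall c', c' \in Cp -> forall s, s \in Sc S c' -> local s (lam c' s)) ->
  c \in Cp ->
  Sc S c != set0 ->
  let b := belief C Cp S theta lam in
  dualdec C Cp S theta lam c
    = maxf (b c) + \sum_(s in Sc S c) maxf (b s)
      - maxf (fun x => b c x + \sum_(s in Sc S c) b s x)
  /\ 0 <= dualdec C Cp S theta lam c.
Proof.
move=> /card_assign_gt0/card_gt0P[x0 _] _ _ _ _ Cp_c K_neq0 b.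
rewrite dualdec_joint //; split=> //.
by rewrite subr_ge0 maxf_joint_belief_le.
Qed.
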